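(* Let $F\colon\mathcal C\to\mathcal D$ be a pseudofunctor between $2$-categories such that the map $\mathrm{Ob}(\mathcal C)\to\mathrm{Ob}(\mathcal D)$ induced by $F$ is a bijection. For every $2$-category $\mathcal E$ let $\Phi_{\mathcal E}\colon \mathrm{PsFun}(\mathcal D,\mathcal E)\to\mathrm{PsFun}(\mathcal C,\mathcal E)$ be the $2$-functor given by precomposition with $F$. If $F$ is pseudofull, then $\Phi_{\mathcal E}$ is $2$-faithful for every $2$-category $\mathcal E$.
   Context: $\mathrm{PsFun}(\mathcal C,\mathcal E)$ denotes the $2$-category of pseudofunctors $\mathcal C\to\mathcal E$, pseudonatural transformations and modifications. A pseudofunctor $F$ is pseudofull if each functor on hom-categories $F_{XY}\colon\mathcal C(X,Y)\to\mathcal D(FX,FY)$ is essentially surjective. A pseudofunctor (or $2$-functor) is $2$-faithful if each functor on hom-categories is fully faithful and injective on objects. *)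

From Stdlib Require Import ProofIrrelevance.
Set Implicit Arguments.
Unset Strict Implicit.

Record PreTwoCat : Type := {
  ob : Type;
  hom : ob -> ob -> Type;
  cell : forall x y : ob, hom x y -> hom x y -> Type;
  id1 : forall x : ob, hom x x;
  (* comp1 g f = g o f *)
  comp1 : forall x y z : ob, hom y z -> hom x y -> hom x z;
  id2 : forall (x y : ob) (f : hom x y), cell f f;
  (* vcomp b a = b . a  (first a, then b) *)
  vcomp : forall (x y : ob) (f g h : hom x y),
      cell g h -> cell f g -> cell f h;
  hcomp : forall (x y z : ob) (f f' : hom y z) (g g' : hom x y),
      cell f f' -> cell g g' -> cell (comp1 f g) (comp1 f' g') }.

Arguments hom : clear implicits.
Arguments id1 {p} x.

Definition ecell (C : PreTwoCat) (x y : ob C) (f g : hom C x y) (p : f = g)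
  : cell f g :=
  match p in _ = g' return cell f g' with eq_refl => id2 f end.

Record TwoCatLaws (C : PreTwoCat) : Prop := {
  t_vid_l : forall x y (f g : hom C x y) (a : cell f g), vcomp (id2 g) a = a;
  t_vid_r : forall x y (f g : hom C x y) (a : cell f g), vcomp a (id2 f) = a;
  t_vassoc : forall x y (f g h k : hom C x y)
      (a : cell f g) (b : cell g h) (c : cell h k),
      vcomp c (vcomp b a) = vcomp (vcomp c b) a;
  t_hid : forall x y z (f : hom C y z) (g : hom C x y),
      hcomp (id2 f) (id2 g) = id2 (comp1 f g);
  t_interchange : forall x y z (f f' f'' : hom C y z) (g g' g'' : hom C x y)
      (b : cell f f') (b' : cell f' f'') (a : cell g g') (a' : cell g' g''),
      hcomp (vcomp b' b) (vcomp a' a) = vcomp (hcomp b' a') (hcomp b a);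
  t_id1_l : forall x y (f : hom C x y), comp1 (id1 y) f = f;
  t_id1_r : forall x y (f : hom C x y), comp1 f (id1 x) = f;
  t_assoc : forall w x y z (f : hom C w x) (g : hom C x y) (h : hom C y z),
      comp1 h (comp1 g f) = comp1 (comp1 h g) f;
  t_hid_l : forall x y (f f' : hom C x y) (a : cell f f'),
      vcomp (ecell (t_id1_l f')) (hcomp (id2 (id1 y)) a)
      = vcomp a (ecell (t_id1_l f));
  t_hid_r : forall x y (f f' : hom C x y) (a : cell f f'),
      vcomp (ecell (t_id1_r f')) (hcomp a (id2 (id1 x)))
      = vcomp a (ecell (t_id1_r f));
  t_hassoc : forall w x y z (f f' : hom C w x) (g g' : hom C x y)
      (h h' : hom C y z) (a : cell f f') (b : cell g g') (c : cell h h'),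
      vcomp (ecell (t_assoc f' g' h')) (hcomp c (hcomp b a))
      = vcomp (hcomp (hcomp c b) a) (ecell (t_assoc f g h)) }.

Record TwoCat : Type := { tc :> PreTwoCat; tc_laws : TwoCatLaws tc }.

Definition c_id1_l (C : TwoCat) := t_id1_l (tc_laws C).
Definition c_id1_r (C : TwoCat) := t_id1_r (tc_laws C).
Definition c_assoc (C : TwoCat) := t_assoc (tc_laws C).
Arguments c_id1_l C {x y} f.
Arguments c_id1_r C {x y} f.
Arguments c_assoc C {w x y z} f g h.

Definition is_iso (C : PreTwoCat) (x y : ob C) (f g : hom C x y)
  (a : cell f g) : Prop :=
  exists b : cell g f, vcomp b a = id2 f /\ vcomp a b = id2 g.

Record PFdata (C D : PreTwoCat) : Type := {
  pf0 : ob C -> ob D;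
  pf1 : forall x y : ob C, hom C x y -> hom D (pf0 x) (pf0 y);
  pf2 : forall (x y : ob C) (f g : hom C x y),
      cell f g -> cell (pf1 f) (pf1 g);
  pphi : forall (x y z : ob C) (f : hom C x y) (g : hom C y z),
      cell (comp1 (pf1 g) (pf1 f)) (pf1 (comp1 g f));
  piota : forall x : ob C, cell (id1 (pf0 x)) (pf1 (id1 x)) }.

Record PFLaws (C D : TwoCat) (F : PFdata C D) : Prop := {
  pf2_id : forall x y (f : hom C x y), pf2 F (id2 f) = id2 (pf1 F f);
  pf2_comp : forall x y (f g h : hom C x y) (a : cell f g) (b : cell g h),
      pf2 F (vcomp b a) = vcomp (pf2 F b) (pf2 F a);
  pphi_iso : forall x y z (f : hom C x y) (g : hom C y z),
      is_iso (pphi F f g);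
  piota_iso : forall x, is_iso (piota F x);
  pphi_nat : forall x y z (f f' : hom C x y) (g g' : hom C y z)
      (a : cell f f') (b : cell g g'),
      vcomp (pf2 F (hcomp b a)) (pphi F f g)
      = vcomp (pphi F f' g') (hcomp (pf2 F b) (pf2 F a));
  pphi_assoc : forall w x y z (f : hom C w x) (g : hom C x y) (h : hom C y z),
      vcomp (ecell (f_equal (@pf1 _ _ F w z) (c_assoc C f g h)))
        (vcomp (pphi F (comp1 g f) h) (hcomp (id2 (pf1 F h)) (pphi F f g)))
      = vcomp (vcomp (pphi F f (comp1 h g)) (hcomp (pphi F g h) (id2 (pf1 F f))))
          (ecell (c_assoc D (pf1 F f) (pf1 F g) (pf1 F h)));
  pphi_unit_l : forall x y (f : hom C x y),
      vcomp (ecell (f_equal (@pf1 _ _ F x y) (c_id1_l C f)))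
        (vcomp (pphi F f (id1 y)) (hcomp (piota F y) (id2 (pf1 F f))))
      = ecell (c_id1_l D (pf1 F f));
  pphi_unit_r : forall x y (f : hom C x y),
      vcomp (ecell (f_equal (@pf1 _ _ F x y) (c_id1_r C f)))
        (vcomp (pphi F (id1 x) f) (hcomp (id2 (pf1 F f)) (piota F x)))
      = ecell (c_id1_r D (pf1 F f)) }.

Record PseudoFunctor (C D : TwoCat) : Type :=
  { pf :> PFdata C D; pf_laws : PFLaws pf }.

Definition compPF (C D E : PreTwoCat) (F : PFdata C D) (G : PFdata D E)
  : PFdata C E :=
  {| pf0 := fun x => pf0 G (pf0 F x);
     pf1 := fun x y f => pf1 G (pf1 F f);
     pf2 := fun x y f g a => pf2 G (pf2 F a);
     pphi := fun x y z f g =>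
       vcomp (pf2 G (pphi F f g)) (pphi G (pf1 F f) (pf1 F g));
     piota := fun x => vcomp (pf2 G (piota F x)) (piota G (pf0 F x)) |}.

Record PNdata (D E : PreTwoCat) (G H : PFdata D E) : Type := {
  pcomp : forall x : ob D, hom E (pf0 G x) (pf0 H x);
  pnat : forall (x y : ob D) (f : hom D x y),
      cell (comp1 (pf1 H f) (pcomp x)) (comp1 (pcomp y) (pf1 G f)) }.

Record PNLaws (D : PreTwoCat) (E : TwoCat) (G H : PFdata D E)
  (a : PNdata G H) : Prop := {
  pn_iso : forall x y (f : hom D x y), is_iso (pnat a f);
  pn_2nat : forall x y (f f' : hom D x y) (b : cell f f'),
      vcomp (hcomp (id2 (pcomp a y)) (pf2 G b)) (pnat a f)
      = vcomp (pnat a f') (hcomp (pf2 H b) (id2 (pcomp a x)));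
  pn_comp : forall x y z (f : hom D x y) (g : hom D y z),
      vcomp (pnat a (comp1 g f)) (hcomp (pphi H f g) (id2 (pcomp a x)))
      = vcomp (hcomp (id2 (pcomp a z)) (pphi G f g))
        (vcomp (ecell (eq_sym (c_assoc E (pf1 G f) (pf1 G g) (pcomp a z))))
        (vcomp (hcomp (pnat a g) (id2 (pf1 G f)))
        (vcomp (ecell (c_assoc E (pf1 G f) (pcomp a y) (pf1 H g)))
        (vcomp (hcomp (id2 (pf1 H g)) (pnat a f))
               (ecell (eq_sym (c_assoc E (pcomp a x) (pf1 H f) (pf1 H g))))))));
  pn_unit : forall x,
      vcomp (pnat a (id1 x)) (hcomp (piota H x) (id2 (pcomp a x)))
      = vcomp (hcomp (id2 (pcomp a x)) (piota G x))
          (vcomp (ecell (eq_sym (c_id1_r E (pcomp a x))))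
                 (ecell (c_id1_l E (pcomp a x)))) }.

Record PseudoNat (D : PreTwoCat) (E : TwoCat) (G H : PFdata D E) : Type :=
  { pn :> PNdata G H; pn_laws : PNLaws pn }.

Record Modif (D E : PreTwoCat) (G H : PFdata D E) (a b : PNdata G H) : Type := {
  mcomp : forall x : ob D, cell (pcomp a x) (pcomp b x);
  mlaw : forall (x y : ob D) (f : hom D x y),
      vcomp (pnat b f) (hcomp (id2 (pf1 H f)) (mcomp x))
      = vcomp (hcomp (mcomp y) (id2 (pf1 G f))) (pnat a f) }.

(** * Precomposition with F : the action of Phi_E on hom-categories *)

Definition whiskerPNdata (C D E : PreTwoCat) (F : PFdata C D)
  (G H : PFdata D E) (a : PNdata G H) : PNdata (compPF F G) (compPF F H) :=
  @Build_PNdata C E (compPF F G) (compPF F H)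
    (fun x => pcomp a (pf0 F x)) (fun x y f => pnat a (pf1 F f)).

Definition whiskerM (C D E : PreTwoCat) (F : PFdata C D)
  (G H : PFdata D E) (a b : PNdata G H) (m : Modif a b)
  : Modif (whiskerPNdata F a) (whiskerPNdata F b) :=
  @Build_Modif C E (compPF F G) (compPF F H)
    (whiskerPNdata F a) (whiskerPNdata F b)
    (fun x => mcomp m (pf0 F x)) (fun x y f => mlaw m (pf1 F f)).

Section Whisker.
Variables (E : TwoCat).

Lemma hcomp_vcomp_id_r (x y z : ob E) (f f' f'' : hom E y z) (g : hom E x y)
  (b : cell f f') (b' : cell f' f'') :
  hcomp (vcomp b' b) (id2 g) = vcomp (hcomp b' (id2 g)) (hcomp b (id2 g)).
Proof.
  rewrite <- (t_interchange (tc_laws E)). now rewrite (t_vid_l (tc_laws E)).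
Qed.

Lemma hcomp_vcomp_id_l (x y z : ob E) (f : hom E y z) (g g' g'' : hom E x y)
  (a : cell g g') (a' : cell g' g'') :
  hcomp (id2 f) (vcomp a' a) = vcomp (hcomp (id2 f) a') (hcomp (id2 f) a).
Proof.
  rewrite <- (t_interchange (tc_laws E)). now rewrite (t_vid_l (tc_laws E)).
Qed.

Lemma whisker_laws (C D : PreTwoCat) (F : PFdata C D) (G H : PFdata D E)
  (a : PseudoNat G H) : PNLaws (whiskerPNdata F a).
Proof.
  destruct a as [a La]. destruct La as [Li L2 Lc Lu].
  constructor; simpl.
  - intros x y f; apply Li.
  - intros x y f f' b; apply L2.
  - intros x y z f g.
    rewrite hcomp_vcomp_id_r, hcomp_vcomp_id_l.
    rewrite (t_vassoc (tc_laws E)), <- L2, <- (t_vassoc (tc_laws E)), Lc.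
    now rewrite !(t_vassoc (tc_laws E)).
  - intros x.
    rewrite hcomp_vcomp_id_r, hcomp_vcomp_id_l.
    rewrite (t_vassoc (tc_laws E)), <- L2, <- (t_vassoc (tc_laws E)), Lu.
    now rewrite !(t_vassoc (tc_laws E)).
Qed.

End Whisker.

Definition whiskerPN (C D : PreTwoCat) (E : TwoCat) (F : PFdata C D)
  (G H : PFdata D E) (a : PseudoNat G H)
  : PseudoNat (compPF F G) (compPF F H) :=
  {| pn := whiskerPNdata F a; pn_laws := whisker_laws F a |}.

Definition ob_bijective (C D : PreTwoCat) (F : PFdata C D) : Prop :=
  (forall x x' : ob C, pf0 F x = pf0 F x' -> x = x') /\
  (forall d : ob D, exists x : ob C, pf0 F x = d).

Definition pseudofull (C D : PreTwoCat) (F : PFdata C D) : Prop :=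
  forall (x y : ob C) (g : hom D (pf0 F x) (pf0 F y)),
    exists (f : hom C x y) (a : cell (pf1 F f) g), is_iso a.

(** Phi_E = (- o F) : PsFun(D,E) -> PsFun(C,E) is 2-faithful, i.e. for all
    pseudofunctors G H : D -> E the functor
    PsFun(D,E)(G,H) -> PsFun(C,E)(GF,HF) is injective on objects and
    fully faithful. *)
Definition precomp_two_faithful (C D E : TwoCat) (F : PFdata C D) : Prop :=
  forall G H : PseudoFunctor D E,
    (forall a b : PseudoNat G H, whiskerPN F a = whiskerPN F b -> a = b) /\
    (forall (a b : PseudoNat G H) (m n : Modif a b),
        whiskerM F m = whiskerM F n -> m = n) /\
    (forall (a b : PseudoNat G H)
            (mu : Modif (whiskerPN F a) (whiskerPN F b)),
        exists m : Modif a b, whiskerM F m = mu).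

(** Since [F] is bijective on objects and pseudofull, every 1-cell [g] of [D]
    is, up to an invertible 2-cell [al : F f ==> g], in the image of [F].  The
    2-naturality of a pseudonatural transformation [a] says that [a_g] composed
    with the whiskering of [H al] equals a composite built from [a_(F f)]; since
    that whiskering has a right inverse, [a_g] is determined by [a_(F f)].
    Hence a transformation is determined by its restriction along [F], and for
    a modification [mu] of restrictions, its components (transported along the
    object bijection) satisfy the modification law at every [g] because they
    do at [F f]. *)

From Stdlib Require Import ProofIrrelevance FunctionalExtensionality ClassicalEpsilon.

Section Extend.
Variables (A B : Type) (f : A -> B).
Hypothesis f_surj : forall b, exists a, f a = b.

Definition extend_along (P : B -> Type) (s : forall a, P (f a)) (b : B) : P b :=
  let w := constructive_indefinite_description _ (f_surj b) in
  eq_rect _ P (s (proj1_sig w)) b (proj2_sig w).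

Lemma extend_alongE (P : B -> Type) (s : forall a, P (f a)) :
  (forall a a', f a = f a' -> a = a') ->
  forall a, extend_along P s (f a) = s a.
Proof.
  intros f_inj a. unfold extend_along.
  destruct (constructive_indefinite_description _ (f_surj (f a))) as [a' e]; simpl.
  assert (a' = a) by (apply f_inj; exact e). subst a'.
  now rewrite (proof_irrelevance _ e eq_refl).
Qed.
End Extend.
Arguments extend_along {A B f} f_surj P s b.
Arguments extend_alongE {A B f} f_surj P s f_inj a.

Section TwoCellAlgebra.
Variable E : TwoCat.

Lemma vcomp_cancel_r (x y : ob E) (f g h : hom E x y) (u v : cell g h)
  (i : cell f g) (j : cell g f) :
  vcomp i j = id2 g -> vcomp u i = vcomp v i -> u = v.
Proof.
  intros Hij Huv.
  rewrite <- (t_vid_r (tc_laws E) u), <- (t_vid_r (tc_laws E) v), <- Hij.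
  now rewrite !(t_vassoc (tc_laws E)), Huv.
Qed.

Lemma hcomp_id2_section (x y z : ob E) (f g : hom E y z) (k : hom E x y)
  (al : cell f g) (be : cell g f) :
  vcomp al be = id2 g ->
  vcomp (hcomp al (id2 k)) (hcomp be (id2 k)) = id2 (comp1 g k).
Proof.
  intros H.
  rewrite <- (t_interchange (tc_laws E)), (t_vid_l (tc_laws E)), H.
  apply (t_hid (tc_laws E)).
Qed.

Lemma whisker_exchange (x y z : ob E) (f f' : hom E y z) (g g' : hom E x y)
  (b : cell f f') (a : cell g g') :
  vcomp (hcomp (id2 f') a) (hcomp b (id2 g))
  = vcomp (hcomp b (id2 g')) (hcomp (id2 f) a).
Proof.
  rewrite <- !(t_interchange (tc_laws E)).
  now rewrite !(t_vid_l (tc_laws E)), !(t_vid_r (tc_laws E)).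
Qed.

Lemma pf2_section (D : TwoCat) (G : PseudoFunctor D E) (x y : ob D)
  (f g : hom D x y) (al : cell f g) (be : cell g f) :
  vcomp al be = id2 g -> vcomp (pf2 G al) (pf2 G be) = id2 (pf1 G g).
Proof.
  intros H. now rewrite <- (pf2_comp (pf_laws G)), H, (pf2_id (pf_laws G)).
Qed.
End TwoCellAlgebra.

Lemma pseudonat_eq (D E : TwoCat) (G H : PFdata D E) (a b : PseudoNat G H) :
  pn a = pn b -> a = b.
Proof.
  destruct a as [a La], b as [b Lb]; simpl; intros <-.
  now rewrite (proof_irrelevance _ La Lb).
Qed.

Lemma modif_eq (D E : PreTwoCat) (G H : PFdata D E) (a b : PNdata G H)
  (m n : Modif a b) : (forall x, mcomp m x = mcomp n x) -> m = n.
Proof.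
  destruct m as [m Lm], n as [n Ln]; simpl; intros Hmn.
  assert (m = n) by (apply functional_extensionality_dep; exact Hmn).
  subst n. now rewrite (proof_irrelevance _ Lm Ln).
Qed.

Section Precomposition.
Variables (C D E : TwoCat) (F : PseudoFunctor C D).
Hypothesis F_inj : forall x x' : ob C, pf0 F x = pf0 F x' -> x = x'.
Hypothesis F_surj : forall d : ob D, exists x : ob C, pf0 F x = d.
Hypothesis F_full : pseudofull F.

Lemma pseudofull_ind (P : forall x y : ob D, hom D x y -> Prop) :
  (forall (cx cy : ob C) (f : hom C cx cy) (g : hom D (pf0 F cx) (pf0 F cy))
          (al : cell (pf1 F f) g) (be : cell g (pf1 F f)),
      vcomp al be = id2 g -> P _ _ g) ->
  forall x y (g : hom D x y), P x y g.
Proof.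
  intros HP x y g.
  destruct (F_surj x) as [cx <-], (F_surj y) as [cy <-].
  destruct (F_full cx cy g) as [f [al [be [_ Hab]]]].
  exact (HP _ _ f g al be Hab).
Qed.

Variables (G H : PseudoFunctor D E).

Lemma whiskerPN_inj (a b : PseudoNat G H) : whiskerPN F a = whiskerPN F b -> a = b.
Proof.
  intros Heq. apply pseudonat_eq.
  apply (f_equal (@pn _ _ _ _)) in Heq; simpl in Heq.
  destruct a as [[pa na] La], b as [[pb nb] Lb]; simpl in *.
  injection Heq as Hp Hn.
  assert (pa = pb) as <-.
  { apply functional_extensionality_dep; intro d.
    destruct (F_surj d) as [c <-]. exact (f_equal (fun h => h c) Hp). }
  apply inj_pair2 in Hn.
  assert (Hnat : forall x y (g : hom D x y), na x y g = nb x y g).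
  { apply pseudofull_ind. intros cx cy f g al be Hab.
    apply vcomp_cancel_r with (i := hcomp (pf2 H al) (id2 (pa (pf0 F cx))))
                             (j := hcomp (pf2 H be) (id2 (pa (pf0 F cx)))).
    - apply hcomp_id2_section, pf2_section, Hab.
    - pose proof (pn_2nat La al) as Na; pose proof (pn_2nat Lb al) as Nb.
      simpl in Na, Nb. rewrite <- Na, <- Nb.
      f_equal. exact (f_equal (fun h => h cx cy f) Hn). }
  assert (na = nb) as <-.
  { do 3 (apply functional_extensionality_dep; intro). apply Hnat. }
  reflexivity.
Qed.

Lemma whiskerM_inj (a b : PseudoNat G H) (m n : Modif a b) :
  whiskerM F m = whiskerM F n -> m = n.
Proof.
  intros Heq. apply modif_eq. intro d.
  destruct (F_surj d) as [c <-].
  exact (f_equal (fun mu => mcomp mu c) Heq).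
Qed.

Section Lift.
Variables (a b : PseudoNat G H) (mu : Modif (whiskerPN F a) (whiskerPN F b)).

Let lift_comp : forall d, cell (pcomp a d) (pcomp b d) :=
  extend_along F_surj (fun d => cell (pcomp a d) (pcomp b d)) (mcomp mu).

Let lift_compE (c : ob C) : lift_comp (pf0 F c) = mcomp mu c :=
  extend_alongE F_surj _ (mcomp mu) F_inj c.

Let lift_law (x y : ob D) (g : hom D x y) :
  vcomp (pnat b g) (hcomp (id2 (pf1 H g)) (lift_comp x))
  = vcomp (hcomp (lift_comp y) (id2 (pf1 G g))) (pnat a g).
Proof.
  revert x y g. apply pseudofull_ind. intros cx cy f g al be Hab.
  rewrite !lift_compE.
  pose proof (mlaw mu f) as M; pose proof (pn_2nat (pn_laws a) al) as Na;
    pose proof (pn_2nat (pn_laws b) al) as Nb.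
  apply vcomp_cancel_r with (i := hcomp (pf2 H al) (id2 (pcomp a (pf0 F cx))))
                           (j := hcomp (pf2 H be) (id2 (pcomp a (pf0 F cx)))).
  { apply hcomp_id2_section, pf2_section, Hab. }
  cbn in *.
  rewrite <- (t_vassoc (tc_laws E)), whisker_exchange, (t_vassoc (tc_laws E)), <- Nb.
  rewrite <- (t_vassoc (tc_laws E)), M, (t_vassoc (tc_laws E)), whisker_exchange.
  now rewrite <- (t_vassoc (tc_laws E)), Na, (t_vassoc (tc_laws E)).
Qed.

Lemma whiskerM_surj : exists m : Modif a b, whiskerM F m = mu.
Proof.
  exists {| mcomp := lift_comp; mlaw := lift_law |}.
  apply modif_eq. intro c. apply lift_compE.
Qed.
End Lift.
End Precomposition.

Theorem mainTheorem3 (C D : TwoCat) (F : PseudoFunctor C D) :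
  ob_bijective F -> pseudofull F ->
  forall E : TwoCat, precomp_two_faithful E F.
Proof.
  intros [F_inj F_surj] F_full E G H. split; [|split].
  - apply whiskerPN_inj; assumption.
  - intros a b. apply whiskerM_inj; assumption.
  - intros a b. apply whiskerM_surj; assumption.
Qed.
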